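(* Let $u,v\in\mathbb{Z}[i]$ with $u+v\in O^I$, $uv\equiv0\pmod{1+i}$ and $\gcd(u,v)\in U$, and suppose the discriminant $(u+v)^2+4iuv$ of $z^2-(u+v)z-iuv=0$ is a square in $\mathbb{Z}[i]$. Then there exist $x,y\in\mathbb{Z}[i]$ with $\gcd(x,y)\in U$ such that $x-y=u+v$ and $xy=iuv$.
   Context: $\mathbb{Z}[i]$ is the ring of Gaussian integers, $U=\{1,-1,i,-i\}$ its unit group; $R(\alpha),I(\alpha)$ are real and imaginary parts. $\gcd(x,y)\in U$ means no common non-unit divisor. $O=\{\alpha: R(\alpha)+I(\alpha)\equiv1\pmod 2\}$, $O^I=\{\alpha\in O: R(\alpha)\equiv 1\pmod 4\}$. *)

From mathcomp Require Import all_boot all_algebra.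
Set Implicit Arguments. Unset Strict Implicit. Unset Printing Implicit Defensive.
Import GRing.Theory Num.Theory.
Local Open Scope ring_scope.

Record gaussint := GI { gre : int; gim : int }.

Definition gadd (a b : gaussint) : gaussint := GI (gre a + gre b) (gim a + gim b).
Definition gsub (a b : gaussint) : gaussint := GI (gre a - gre b) (gim a - gim b).
Definition gmul (a b : gaussint) : gaussint :=
  GI (gre a * gre b - gim a * gim b) (gre a * gim b + gim a * gre b).

Definition gi_one : gaussint := GI 1 0.
Definition gi_i : gaussint := GI 0 1.
Definition gi_four : gaussint := GI 4 0.
Definition gi_1pi : gaussint := GI 1 1.

Definition gdvd (d a : gaussint) : Prop := exists q : gaussint, a = gmul d q.

Definition gunit (u : gaussint) : Prop :=
  u = GI 1 0 \/ u = GI (-1) 0 \/ u = GI 0 1 \/ u = GI 0 (-1).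

Definition gcd_unit (x y : gaussint) : Prop :=
  forall d : gaussint, gdvd d x -> gdvd d y -> gunit d.

Definition in_O (a : gaussint) : Prop := ((gre a + gim a) %% 2)%Z = 1.
Definition in_OI (a : gaussint) : Prop := in_O a /\ ((gre a) %% 4)%Z = 1.

(* Since s = u + v is not divisible by 1 + i, every square root w of the
   discriminant s^2 + 4iuv is congruent to s modulo 2 (compare real parts of
   w^2 and s^2 modulo 4), so x = (w + s)/2 and y = (w - s)/2 are Gaussian
   integers with x - y = s and xy = iuv.  A common divisor of x and y divides
   u + v and uv.  As Z[i] is Euclidean, gcd(u,v) a unit gives a Bezout relation
   au + bv = 1, whence v = (a - b)uv + bv(u + v) and u = (u + v) - v are both
   divisible by it, so it is a unit. *)
From HB Require Import structures.
From mathcomp Require Import all_boot all_algebra.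
From mathcomp Require Import zify ring.
Set Implicit Arguments. Unset Strict Implicit. Unset Printing Implicit Defensive.
Import GRing.Theory Num.Theory.
Local Open Scope ring_scope.

Definition gi_pair (a : gaussint) : int * int := (gre a, gim a).
Definition pair_gi (p : int * int) : gaussint := GI p.1 p.2.
Lemma gi_pairK : cancel gi_pair pair_gi. Proof. by case. Qed.
HB.instance Definition _ := Countable.copy gaussint (can_type gi_pairK).

Definition gopp (a : gaussint) : gaussint := GI (- gre a) (- gim a).

Ltac gi_ring := rewrite /gadd /gopp /gmul /gi_one /=; congr GI; ring.

Lemma gaddA : associative gadd. Proof. by do 3!case=> ? ?; gi_ring. Qed.
Lemma gaddC : commutative gadd. Proof. by do 2!case=> ? ?; gi_ring. Qed.
Lemma gadd0 : left_id (GI 0 0) gadd. Proof. by case=> ? ?; gi_ring. Qed.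
Lemma gaddN : left_inverse (GI 0 0) gopp gadd. Proof. by case=> ? ?; gi_ring. Qed.
HB.instance Definition _ := GRing.isZmodule.Build gaussint gaddA gaddC gadd0 gaddN.

Lemma gmulA : associative gmul. Proof. by do 3!case=> ? ?; gi_ring. Qed.
Lemma gmulC : commutative gmul. Proof. by do 2!case=> ? ?; gi_ring. Qed.
Lemma gmul1 : left_id gi_one gmul. Proof. by case=> ? ?; gi_ring. Qed.
Lemma gmulDl : left_distributive gmul gadd. Proof. by do 3!case=> ? ?; gi_ring. Qed.
Lemma gi_one_neq0 : gi_one != GI 0 0. Proof. by []. Qed.
HB.instance Definition _ :=
  GRing.Zmodule_isComNzRing.Build gaussint gmulA gmulC gmul1 gmulDl gi_one_neq0.

Lemma gaddE a b : gadd a b = a + b. Proof. by []. Qed.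
Lemma gmulE a b : gmul a b = a * b. Proof. by []. Qed.
Lemma gi_fourE : gi_four = 4. Proof. by []. Qed.
Lemma gi_i_sqr : gi_i * gi_i = -1. Proof. by []. Qed.

Lemma gdvd_mulr x d a : gdvd d a -> gdvd d (a * x).
Proof. by case=> q ->; exists (q * x); rewrite !gmulE mulrA. Qed.

Lemma gdvd_add d a b : gdvd d a -> gdvd d b -> gdvd d (a + b).
Proof. by case=> q ->; case=> q' ->; exists (q + q'); rewrite !gmulE; ring. Qed.

Definition gnorm (a : gaussint) : int := gre a * gre a + gim a * gim a.

Lemma gnorm_ge0 a : 0 <= gnorm a.
Proof. by case: a => x y; rewrite /gnorm /=; nia. Qed.

Lemma gnorm_eq0 a : gnorm a = 0 -> a = 0.
Proof. by case: a => x y; rewrite /gnorm /= => n0; congr GI; nia. Qed.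

Lemma nearest_multiple (m n : int) : 0 < n -> exists q, -n <= 2 * (m - n * q) <= n.
Proof. by move=> n_gt0; exists ((2 * m + n) %/ (2 * n))%Z; lia. Qed.

Lemma gauss_euclid a b : 0 < gnorm b ->
  exists q, gnorm (a - b * q) < gnorm b.
Proof.
case: a b => a1 a2 [b1 b2]; rewrite /gnorm /= => n_gt0.
set n := b1 * b1 + b2 * b2 in n_gt0 *.
have [q1 Hq1] := nearest_multiple (a1 * b1 + a2 * b2) n_gt0.
have [q2 Hq2] := nearest_multiple (a2 * b1 - a1 * b2) n_gt0.
exists (GI q1 q2) => /=.
set r1 := a1 - _; set r2 := a2 - _.
set e1 := a1 * b1 + a2 * b2 - n * q1 in Hq1.
set e2 := a2 * b1 - a1 * b2 - n * q2 in Hq2.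
have norm_r : n * (r1 * r1 + r2 * r2) = e1 * e1 + e2 * e2.
  by rewrite /r1 /r2 /e1 /e2 /n; ring.
have : 4 * (e1 * e1) <= n * n by nia.
have : 4 * (e2 * e2) <= n * n by nia.
nia.
Qed.

Lemma gauss_bezout a b :
  exists g al be, [/\ gdvd g a, gdvd g b & g = al * a + be * b].
Proof.
have [n] := ubnP `|gnorm b|%N; elim: n a b => // n IH a b lt_bn.
have [b0 | b_gt0] : gnorm b = 0 \/ 0 < gnorm b by have := gnorm_ge0 b; lia.
  rewrite (gnorm_eq0 b0); exists a, 1, 0; split; rewrite ?mul1r ?mul0r ?addr0 //.
    by exists 1; rewrite gmulE mulr1.
  by exists 0; rewrite gmulE mulr0.
have [q lt_rb] := gauss_euclid a b_gt0.
have [|g [al [be [gb gr def_g]]]] := IH b (a - b * q).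
  (* [set] merges two copies of [gnorm (a - b * q)] that differ only in their
     canonical instances, and would otherwise be distinct atoms for [lia]. *)
  by move: lt_rb (gnorm_ge0 (a - b * q)); set r := gnorm _; lia.
exists g, be, (al - be * q); split=> //.
  by rewrite -(subrK (b * q) a); exact: gdvd_add gr (gdvd_mulr _ gb).
by rewrite def_g; ring.
Qed.

Lemma gunit_inv g : gunit g -> exists h, h * g = 1.
Proof. by case=> [|[|[|]]] ->; [exists 1 | exists (-1) | exists (GI 0 (-1)) | exists gi_i]. Qed.

Lemma gcd_unit_bezout a b : gcd_unit a b -> exists al be, al * a + be * b = 1.
Proof.
move=> ab1; have [g [al [be [ga gb def_g]]]] := gauss_bezout a b.
have [h hg1] := gunit_inv (ab1 g ga gb).
by exists (h * al), (h * be); rewrite -hg1 def_g; ring.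
Qed.

Lemma gcd_unit_dvd_add_mul u v d : gcd_unit u v ->
  gdvd d (u + v) -> gdvd d (u * v) -> gunit d.
Proof.
move=> uv1 d_add d_mul; have [al [be bez]] := gcd_unit_bezout uv1.
have d_v : gdvd d v.
  have -> : v = u * v * (al - be) + (u + v) * (be * v).
    by rewrite -[LHS]mulr1 -bez; ring.
  exact: gdvd_add (gdvd_mulr _ d_mul) (gdvd_mulr _ d_add).
have d_u : gdvd d u.
  by rewrite -(addrK v u) -mulrN1; exact: gdvd_add d_add (gdvd_mulr _ d_v).
exact: uv1 d_u d_v.
Qed.

Lemma sqr_diff_parity (a b c d k : int) :
  ((c + d) %% 2 = 1)%Z -> a * a - b * b = c * c - d * d + 4 * k ->
  ((a - c) %% 2 = 0)%Z /\ ((b - d) %% 2 = 0)%Z.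
Proof.
have halve (x : int) : exists y r, x = 2 * y + r /\ (r = 0 \/ r = 1).
  by exists (x %/ 2)%Z, (x %% 2)%Z; lia.
have [a' [ra [-> ha]]] := halve a; have [b' [rb [-> hb]]] := halve b.
have [c' [rc [-> hc]]] := halve c; have [d' [rd [-> hd]]] := halve d.
by case: ha hb hc hd => -> [] -> [] -> [] ->; lia.
Qed.

Lemma sqr_congr_mod2 s w P : in_O s -> w * w = s * s + 4 * P ->
  exists t, w = s + 2 * t.
Proof.
case: s w P => c d [a b] [p1 p2]; rewrite /in_O /= => odd_cd [re_eq _].
have [|a_c b_d] := @sqr_diff_parity a b c d p1 odd_cd; first by lia.
by exists (GI ((a - c) %/ 2)%Z ((b - d) %/ 2)%Z); congr GI => /=; lia.
Qed.

Lemma mul4r_inj : injective (fun a : gaussint => 4 * a).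
Proof. by move=> [a1 a2] [b1 b2] [e1 e2]; congr GI; lia. Qed.

Lemma gauss_quadratic_root s w P : in_O s -> w * w = s * s + 4 * P ->
  exists x y, x - y = s /\ x * y = P.
Proof.
move=> s_odd disc; have [t def_w] := sqr_congr_mod2 s_odd disc.
exists (s + t), t; split; first by rewrite addrK.
by apply: mul4r_inj; apply: (addrI (s * s)); rewrite -disc def_w; ring.
Qed.

Theorem corollary4p22 (u v : gaussint) :
  in_OI (gadd u v) ->
  gdvd gi_1pi (gmul u v) ->
  gcd_unit u v ->
  (exists w : gaussint,
     gmul w w = gadd (gmul (gadd u v) (gadd u v))
                     (gmul gi_four (gmul gi_i (gmul u v)))) ->
  exists x y : gaussint,
    gcd_unit x y /\ gsub x y = gadd u v /\ gmul x y = gmul gi_i (gmul u v).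
Proof.
move=> [s_odd _] _ uv1 [w]; rewrite gaddE in s_odd.
rewrite !gmulE gaddE gi_fourE => disc.
have [x [y [def_s def_P]]] := gauss_quadratic_root s_odd disc.
exists x, y; split=> // d d_x d_y; apply: gcd_unit_dvd_add_mul uv1 _ _.
  by rewrite -def_s -mulrN1; exact: gdvd_add d_x (gdvd_mulr _ d_y).
have -> : u * v = x * (y * - gi_i).
  by rewrite [RHS]mulrA def_P mulrN mulrAC gi_i_sqr mulN1r opprK.
exact: gdvd_mulr _ d_x.
Qed.
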